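(* Let $a<b<c$ be elements of $\mathcal{C}_n$ and let $k$ be an integer with $a+1\le k\le b$. Then the layer $\mathcal{L}^{k}_{a}\left(\triangle^{(n)}\{a,b,c\}\right)=\{a_kb_{n-k-i}c_i:\ 0\le i\le n-k\}$ is a subsemiring of $\triangle^{(n)}\{a,b,c\}$.
   Context: $\mathcal{C}_n=\{0,1,\dots,n-1\}$ with its usual order; $\widehat{\mathcal{E}}_{\mathcal{C}_n}$ is the set of all order-preserving maps $\mathcal{C}_n\to\mathcal{C}_n$ (not required to fix $0$), a semiring with $(\alpha+\beta)(x)=\max(\alpha(x),\beta(x))$ and $(\alpha\cdot\beta)(x)=\beta(\alpha(x))$. The notation $a_kb_\ell c_m$ (with $k+\ell+m=n$) denotes the map sending $0,\dots,k-1$ to $a$, the next $\ell$ elements to $b$ and the last $m$ elements to $c$ (factors with subscript $0$ are omitted). The triangle $\triangle^{(n)}\{a,b,c\}$ is the set of all $\alpha\in\widehat{\mathcal{E}}_{\mathcal{C}_n}$ with image in $\{a,b,c\}$. The layer $\mathcal{L}^{k}_{a}$ is the set of elements of the triangle mapping exactly $k$ elements of $\mathcal{C}_n$ to $a$. *)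

From mathcomp Require Import all_boot.
Set Implicit Arguments. Unset Strict Implicit. Unset Printing Implicit Defensive.

(* C_n = 'I_n with the usual order; maps C_n -> C_n are finite functions. *)
Notation map_n n := {ffun 'I_n -> 'I_n}.

Definition order_preserving n (f : map_n n) : bool :=
  [forall x : 'I_n, forall y : 'I_n, (x <= y) ==> (f x <= f y)].

Definition eadd n (f g : map_n n) : map_n n :=
  [ffun x => if f x <= g x then g x else f x].
Definition emul n (f g : map_n n) : map_n n :=
  [ffun x => g (f x)].                                   (* (f.g)(x) = g(f(x)) *)

Definition triangle n (a b c : 'I_n) : {set map_n n} :=
  [set f | order_preserving f && [forall x, f x \in [:: a; b; c]]].

Definition layer n (k : nat) (a : 'I_n) (S : {set map_n n}) : {set map_n n} :=
  [set f in S | #|[set x | f x == a]| == k].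

(* a_k b_l c_m : first k elements to a, next l to b, remaining to c *)
Definition abc n (a b c : 'I_n) (k l : nat) : map_n n :=
  [ffun x : 'I_n => if x < k then a else if x < k + l then b else c].

Definition subsemiring n (T S : {set map_n n}) : Prop :=
  [/\ T \subset S, T != set0,
      (forall f g, f \in T -> g \in T -> eadd f g \in T) &
      (forall f g, f \in T -> g \in T -> emul f g \in T)].

From mathcomp Require Import all_boot.
From mathcomp Require Import zify.

Set Implicit Arguments.
Unset Strict Implicit.
Unset Printing Implicit Defensive.

(* An element of the triangle is determined by the two down-closed sets
   [f <= a] and [f <= b]; a down-closed subset of C_n is an initial segment,
   so f is a_k b_l c_m with k = #|[f <= a]| and k + l = #|[f <= b]|.  The
   layer fixes k, and it is closed under composition because, when
   a < k <= b, a value of an element of the triangle is below k exactly when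
   it equals a, i.e. when it lies in the a-block of the next factor. *)

Lemma card_ord_ltn n j : j <= n -> #|[set x : 'I_n | x < j]| = j.
Proof.
move=> le_jn.
have -> : [set x : 'I_n | x < j] = [set widen_ord le_jn y | y : 'I_j].
  apply/setP=> x; rewrite inE; apply/idP/imsetP => [lt_xj | [y _ ->]].
    by exists (Ordinal lt_xj) => //; apply: val_inj.
  by rewrite /= ltn_ord.
by rewrite card_imset ?card_ord // => y z [] /val_inj.
Qed.

Definition downclosed n (D : {set 'I_n}) : Prop :=
  forall x y : 'I_n, x <= y -> y \in D -> x \in D.

Lemma mem_downclosed n (D : {set 'I_n}) :
  downclosed D -> forall x, (x \in D) = (x < #|D|).
Proof.
move=> downD x; apply/idP/idP => [Dx | ].
  have : [set y : 'I_n | y < x.+1] \subset D.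
    by apply/subsetP=> y; rewrite inE ltnS => le_yx; apply: downD le_yx Dx.
  by move/subset_leq_card; rewrite card_ord_ltn.
apply: contraTT => Dx; rewrite -leqNgt.
have : D \subset [set y : 'I_n | y < x].
  by apply/subsetP=> y Dy; rewrite inE ltnNge; apply: contraNN Dx => /downD; apply.
by move/subset_leq_card; rewrite card_ord_ltn // ltnW.
Qed.

Lemma order_preservingP n (f : map_n n) :
  reflect {homo f : x y / x <= y} (order_preserving f).
Proof.
apply: (iffP forallP) => [mono x y | mono x].
  by move/forallP: (mono x) => /(_ y) /implyP.
by apply/forallP=> y; apply/implyP; apply: mono.
Qed.

Lemma sublevel_downclosed n (f : map_n n) (v : nat) :
  {homo f : x y / x <= y} -> downclosed [set x | f x <= v].
Proof. by move=> mono x y le_xy; rewrite !inE; apply/leq_trans/mono. Qed.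

Lemma card_sublevel_mono n (f : map_n n) (v w : nat) :
  v <= w -> #|[set x | f x <= v]| <= #|[set x | f x <= w]|.
Proof.
move=> le_vw; apply/subset_leq_card/subsetP => x; rewrite !inE.
by move/leq_trans; apply.
Qed.

Section Triangle.

Variables (n : nat) (a b c : 'I_n).
Hypotheses (lt_ab : a < b) (lt_bc : b < c).

Let T := triangle a b c.

Lemma triangleP (f : map_n n) :
  reflect ({homo f : x y / x <= y} /\ forall x, f x \in [:: a; b; c]) (f \in T).
Proof.
by rewrite inE; apply: (iffP andP) =>
  [[/order_preservingP ? /forallP ?] | [/order_preservingP ? /forallP ?]].
Qed.

Lemma mem3_eq_a (v : 'I_n) : v \in [:: a; b; c] -> (v == a) = (v <= a).
Proof. by rewrite !inE -!val_eqE /= => /or3P[] /eqP ->; lia. Qed.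

Lemma mem3_eq_c (v : 'I_n) : v \in [:: a; b; c] -> (v == c) = ~~ (v <= b).
Proof. by rewrite !inE -!val_eqE /= => /or3P[] /eqP ->; lia. Qed.

Lemma abc_in_triangle k l : abc a b c k l \in T.
Proof.
apply/triangleP; split => [x y le_xy | x]; rewrite !ffunE.
  by do 4?case: ifP => ? //; lia.
by do 2?case: ifP; rewrite !inE eqxx ?orbT.
Qed.

Lemma triangle_abc (f : map_n n) : f \in T ->
  let A := [set x | f x <= a] in let B := [set x | f x <= b] in
  f = abc a b c #|A| (#|B| - #|A|).
Proof.
move=> /triangleP[mono vals] A B.
have le_AB : #|A| <= #|B| by apply/card_sublevel_mono/ltnW.
apply/ffunP=> x; rewrite ffunE subnKC //.
rewrite -!mem_downclosed; try exact: sublevel_downclosed.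
rewrite !inE -mem3_eq_a //; case: eqP => [-> // | /eqP ne_fxa].
case: ifP => [le_fxb | /negbT]; last by rewrite -mem3_eq_c // => /eqP.
by apply/val_inj/eqP; move: (vals x) ne_fxa; rewrite !inE -!val_eqE /=; lia.
Qed.

Lemma triangle_eadd f g : f \in T -> g \in T -> eadd f g \in T.
Proof.
move=> /triangleP[monof valsf] /triangleP[monog valsg].
apply/triangleP; split => [x y le_xy | x]; rewrite !ffunE; last by case: ifP.
by have := monof _ _ le_xy; have := monog _ _ le_xy; do 2 case: ifP; lia.
Qed.

Lemma triangle_emul f g : f \in T -> g \in T -> emul f g \in T.
Proof.
move=> /triangleP[monof _] /triangleP[monog valsg].
by apply/triangleP; split => [x y /monof /monog | x]; rewrite !ffunE.
Qed.

Lemma card_eq_a_sublevel f :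
  f \in T -> #|[set x | f x == a]| = #|[set x | f x <= a]|.
Proof.
by move=> /triangleP[_ vals]; apply: eq_card => x; rewrite !inE mem3_eq_a.
Qed.

Variable k : nat.
Hypothesis le_kn : k <= n.

Let L := layer k a T.

Lemma layerP (f : map_n n) :
  reflect (f \in T /\ forall x, (f x == a) = (x < k)) (f \in L).
Proof.
apply: (iffP setIdP) => [[fT /eqP cardA] | [fT eqa]].
  split=> // x; have /triangleP[mono vals] := fT.
  rewrite -cardA card_eq_a_sublevel // -mem_downclosed.
    by rewrite inE mem3_eq_a.
  exact: sublevel_downclosed.
split=> //; rewrite -[k in _ == k](card_ord_ltn le_kn).
by apply/eqP/eq_card=> x; rewrite !inE eqa.
Qed.

Lemma abc_in_layer l : abc a b c k l \in L.
Proof.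
apply/layerP; split=> [|x]; first exact: abc_in_triangle.
by rewrite ffunE -!val_eqE /=; do 2?case: ifP; lia.
Qed.

Lemma layer_abc f :
  f \in L -> exists i : 'I_(n - k).+1, f = abc a b c k (n - k - i).
Proof.
move=> /setIdP[fT /eqP]; rewrite card_eq_a_sublevel // => cardA.
set B := [set x | f x <= b].
have le_kB : k <= #|B| by rewrite -cardA; apply/card_sublevel_mono/ltnW.
have le_Bn : #|B| <= n by rewrite -[n in _ <= n]card_ord max_card.
have lt_i : n - #|B| < (n - k).+1 by lia.
exists (Ordinal lt_i); rewrite [LHS]triangle_abc // cardA /=.
by rewrite subnAC subKn.
Qed.

Lemma layer_eadd f g : f \in L -> g \in L -> eadd f g \in L.
Proof.
move=> /layerP[fT eqaf] /layerP[gT eqag]; apply/layerP.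
by split=> [|x]; [apply: triangle_eadd | rewrite ffunE; case: ifP].
Qed.

Hypotheses (lt_ak : a < k) (le_kb : k <= b).

Lemma layer_emul f g : f \in L -> g \in L -> emul f g \in L.
Proof.
move=> /layerP[fT eqaf] /layerP[gT eqag]; apply/layerP.
split=> [|x]; first exact: triangle_emul.
have /triangleP[_ valsf] := fT.
rewrite ffunE eqag -(eqaf x) -val_eqE /=.
by move: (valsf x); rewrite !inE -!val_eqE /=; lia.
Qed.

End Triangle.

Theorem proposition27 (n : nat) (a b c : 'I_n) (k : nat) :
  a < b -> b < c -> a.+1 <= k -> k <= b ->
  layer k a (triangle a b c) =
    [set f | [exists i : 'I_(n - k).+1, f == abc a b c k (n - k - i)]]
  /\ subsemiring (layer k a (triangle a b c)) (triangle a b c).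
Proof.
move=> lt_ab lt_bc lt_ak le_kb.
have le_kn : k <= n by have := ltn_ord b; lia.
split.
  apply/setP=> f; rewrite [in RHS]inE; apply/idP/existsP => [fL | [i /eqP ->]].
    by have [i ->] := layer_abc lt_ab lt_bc le_kn fL; exists i.
  exact: abc_in_layer.
split.
- by apply/subsetP=> f /setIdP[].
- by apply/set0Pn; exists (abc a b c k 0); apply: abc_in_layer.
- exact: layer_eadd.
- exact: layer_emul.
Qed.
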